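(* Let $\Lambda=(V,\pi,v,\le)$ be a bi-colored weighted ordered vertex with $r(\Lambda)=2$ and $|V_\bullet|=2$, identify $V=\{1,\dots,l\}$ via $\le$, and suppose $s(\Lambda)\ne0$. Then $l\ge3$ and: (1) if $V_\bullet=\{1,2\}$, then $s(\Lambda)=(-1)^{l-1}$; (2) if $V_\bullet=\{1,a\}$ with $a\ge3$, then $v(2)+\dots+v(a-2)<v(a-1)+v(a+1)+\dots+v(l)$, $v(2)+\dots+v(a-1)\ge v(a+1)+\dots+v(l)$, and $s(\Lambda)=(-1)^l$; (3) if $V_\bullet=\{2,3\}$, then $v(1)<v(4)+\dots+v(l)$ and $s(\Lambda)=(-1)^l$; (4) if $V_\bullet=\{2,a\}$ with $a\ge4$, then $v(1)+v(3)+\dots+v(a-2)<v(a-1)+v(a+1)+\dots+v(l)$, $v(1)+v(3)+\dots+v(a-1)\ge v(a+1)+\dots+v(l)$, and $s(\Lambda)=(-1)^{l-1}$.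
   Context: A bi-colored weighted ordered vertex is $\Lambda=(V,\pi,v,\le)$ with $V$ a finite set, $\pi\colon V\to\{\bullet,\circ\}$, $v\colon V\to\mathbb{Z}_{\ge1}$, $\le$ a total order on $V$. Put $V_\bullet=\pi^{-1}(\bullet)$, $V_\circ=\pi^{-1}(\circ)$, $r(\Lambda)=\sum_{i\in V_\bullet}v(i)$; $v_i=(v(i),0)$ if $i\in V_\bullet$, $v_i=(0,v(i))$ if $i\in V_\circ$. For $(r,n)\in\mathbb{Z}_{\ge0}^2\setminus\{0\}$ let $\mu(r,n)=n/r\in\mathbb{Q}\cup\{\infty\}$ ($\infty$ if $r=0$). For vectors $w_1,\dots,w_l$ define $s_l(w_1,\dots,w_l)=(-1)^k$ if for each $i=1,\dots,l-1$ either (a) $\mu(w_i)>\mu(w_{i+1})$ and $\mu(w_1+\dots+w_i)\ge\mu(w_{i+1}+\dots+w_l)$, or (b) $\mu(w_i)\le\mu(w_{i+1})$ and $\mu(w_1+\dots+w_i)<\mu(w_{i+1}+\dots+w_l)$, where $k$ is the number of $i$ satisfying (b); otherwise $s_l=0$. Set $s(\Lambda)=s_l(v_1,\dots,v_l)$, $l=|V|$. Empty sums are $0$. *)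

From HB Require Import structures.
From mathcomp Require Import all_boot all_order all_algebra.
Set Implicit Arguments. Unset Strict Implicit. Unset Printing Implicit Defensive.
Import Order.TTheory GRing.Theory Num.Theory.
Local Open Scope ring_scope.

Inductive color := Black | White.
Definition is_black (c : color) : bool := if c is Black then true else false.

(* slope mu(r,n) = n/r in Q \cup {oo}; None encodes oo (r = 0). *)
Definition mu (w : nat * nat) : option rat :=
  if w.1 == 0%N then None else Some (w.2%:R / w.1%:R).

Definition mu_lt (x y : option rat) : bool :=
  match x, y with
  | Some a, Some b => a < b
  | Some _, None => true
  | None, _ => false
  end.
Definition mu_le (x y : option rat) : bool := ~~ mu_lt y x.

Definition vsum (s : seq (nat * nat)) : nat * nat :=
  (sumn (map fst s), sumn (map snd s)).

(* s_l(w_1,...,w_l), with the list 0-indexed: index i (0 <= i < l-1) of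
   the list corresponds to index i+1 of the paper. *)
Definition condA (ws : seq (nat * nat)) (i : nat) : bool :=
  mu_lt (mu (nth (0,0)%N ws i.+1)) (mu (nth (0,0)%N ws i)) &&
  mu_le (mu (vsum (drop i.+1 ws))) (mu (vsum (take i.+1 ws))).
Definition condB (ws : seq (nat * nat)) (i : nat) : bool :=
  mu_le (mu (nth (0,0)%N ws i)) (mu (nth (0,0)%N ws i.+1)) &&
  mu_lt (mu (vsum (take i.+1 ws))) (mu (vsum (drop i.+1 ws))).

Definition s_l (ws : seq (nat * nat)) : int :=
  let I := iota 0 (size ws).-1 in
  if all (fun i => condA ws i || condB ws i) I
  then (-1) ^+ (count (condB ws) I) else 0.

(* A bi-colored weighted ordered vertex with V identified with {1,...,l}
   via the order: colours pi i and weights v i for 1 <= i <= l. *)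
Definition vecv (pi : nat -> color) (v : nat -> nat) (i : nat) : nat * nat :=
  if is_black (pi i) then (v i, 0%N) else (0%N, v i).

Definition sLam (l : nat) (pi : nat -> color) (v : nat -> nat) : int :=
  s_l [seq vecv pi v i | i <- iota 1 l].

Definition Vb (l : nat) (pi : nat -> color) : seq nat :=
  [seq i <- iota 1 l | is_black (pi i)].

Definition rLam (l : nat) (pi : nat -> color) (v : nat -> nat) : nat :=
  (\sum_(1 <= i < l.+1 | is_black (pi i)) v i)%N.

From HB Require Import structures.
From mathcomp Require Import all_boot all_order all_algebra.
From mathcomp Require Import zify.
Set Implicit Arguments. Unset Strict Implicit. Unset Printing Implicit Defensive.
Import Order.TTheory GRing.Theory Num.Theory.
Local Open Scope ring_scope.

(* As r = 2 and weights are positive, both black vertices p < q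
   have weight 1.  A single vertex has slope 0 (black) or oo (white), so the
   first clause of (a) holds exactly at a descent, a white vertex followed by a
   black one, and that of (b) exactly elsewhere; hence s is (-1) to the number
   of non-descents, and the descents are at p (unless p = 1) and at q (unless
   q = p + 1).  At a split strictly after p and at most at q, each side carries
   one black vertex of weight 1, so the slope comparison in (a) or (b) is a
   comparison of white weights: this gives the inequalities, and 3 <= l since
   for V = {1, 2} all black the split at 2 would need white weight after it. *)

Lemma sign_subn2 (R : pzRingType) (n : nat) :
  (2 <= n)%N -> (-1) ^+ (n - 2) = (-1) ^+ n :> R.
Proof. by move/subnK=> {2}<-; rewrite exprD sqrrN expr1n mulr1. Qed.

Local Open Scope nat_scope.

Lemma big_nat_neq_first {R : Type} {idx : R} {op : R -> R -> R} m n (F : nat -> R) :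
  \big[op/idx]_(m <= i < n | i != m) F i = \big[op/idx]_(m.+1 <= i < n) F i.
Proof.
have [mn|nm] := ltnP m n; last by rewrite !big_geq // ltnW.
rewrite big_ltn_cond // eqxx /= big_nat_cond [RHS]big_nat_cond.
by apply: eq_bigl => i; case: (boolP (m < i < n)) => //= /andP[/gtn_eqF->].
Qed.

Lemma count_iota_guarded_pred1 (b : bool) c n :
  c < n -> count (fun i => b && (i == c)) (iota 0 n) = b.
Proof.
move=> cn; case: b => /=; last exact: count_pred0.
by have := count_uniq_mem c (iota_uniq 0 n); rewrite mem_iota /= cn.
Qed.

Lemma big_nat_pred1 {R : Type} {idx : R} {op : Monoid.com_law idx}
    m n c (P : pred nat) (F : nat -> R) :
  m <= c < n -> {in index_iota m n, P =1 pred1 c} ->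
  \big[op/idx]_(m <= i < n | P i) F i = F c.
Proof.
move=> cmn Pc; rewrite big_mkcond (bigD1_seq c) ?iota_uniq //=; last first.
  by rewrite mem_index_iota.
rewrite Pc ?mem_index_iota //= eqxx big1_seq ?Monoid.mulm1 // => i /andP[ic].
by move=> /Pc->; rewrite /= (negbTE ic).
Qed.

Definition descent (ws : seq (nat * nat)) (i : nat) : bool :=
  mu_lt (mu (nth (0, 0) ws i.+1)) (mu (nth (0, 0) ws i)).

Lemma condB_descent ws i :
  condA ws i || condB ws i -> condB ws i = ~~ descent ws i.
Proof.
by rewrite /condA /condB /mu_le -/(descent ws i); case: descent => //=; rewrite orbF.
Qed.

Lemma condAB_split ws i : condA ws i || condB ws i ->
  if descent ws i
  then mu_le (mu (vsum (drop i.+1 ws))) (mu (vsum (take i.+1 ws)))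
  else mu_lt (mu (vsum (take i.+1 ws))) (mu (vsum (drop i.+1 ws))).
Proof.
by rewrite /condA /condB /mu_le -/(descent ws i); case: descent; rewrite /= ?orbF.
Qed.

Lemma s_l_neq0_condAB ws i :
  s_l ws != 0%R -> i < (size ws).-1 -> condA ws i || condB ws i.
Proof.
rewrite /s_l; case: ifP => [/allP ABws _ i_lt | _]; last by rewrite eqxx.
by apply: ABws; rewrite mem_iota.
Qed.

Lemma s_l_neq0_sign ws : s_l ws != 0%R ->
  s_l ws = (-1) ^+ count (fun i => ~~ descent ws i) (iota 0 (size ws).-1).
Proof.
move=> ws_neq0; have ABws := s_l_neq0_condAB ws_neq0.
move: ws_neq0; rewrite /s_l; case: ifP => _; last by rewrite eqxx.
move=> _; congr (_ ^+ _); apply: eq_in_count => i.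
by rewrite mem_iota => /andP[_ /ABws/condB_descent].
Qed.

Definition interval_weight (pi : nat -> color) (v : nat -> nat) (m n : nat) :=
  (\sum_(m <= j < n | is_black (pi j)) v j,
   \sum_(m <= j < n | ~~ is_black (pi j)) v j).

Lemma vsum_vecv pi v s : vsum [seq vecv pi v j | j <- s] =
  (\sum_(j <- s | is_black (pi j)) v j, \sum_(j <- s | ~~ is_black (pi j)) v j).
Proof.
elim: s => [|j s IHs]; first by rewrite !big_nil.
move: IHs; rewrite !big_cons /vsum /= => -[-> ->].
by rewrite /vecv; case: is_black.
Qed.

Lemma mu_vecv_lt pi v i j : 0 < v i -> 0 < v j ->
  mu_lt (mu (vecv pi v j)) (mu (vecv pi v i)) =
  is_black (pi j) && ~~ is_black (pi i).
Proof.
rewrite !lt0n => /negbTE vi /negbTE vj.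
by rewrite /vecv /mu; case: is_black; case: is_black; rewrite /= ?vi ?vj //= !mul0r ltxx.
Qed.

Lemma mu_unit_lt a b : mu_lt (mu (1, a)) (mu (1, b)) = (a < b).
Proof. by rewrite /mu /= !divr1 ltr_nat. Qed.

Lemma mu_unit_le a b : mu_le (mu (1, a)) (mu (1, b)) = (a <= b).
Proof. by rewrite /mu_le mu_unit_lt -leqNgt. Qed.

Section NonzeroSign.

Variables (l : nat) (pi : nat -> color) (v : nat -> nat).
Hypothesis v_gt0 : forall i, 1 <= i <= l -> 0 < v i.
Hypothesis sLam_neq0 : sLam l pi v != 0%R.

Let ws := [seq vecv pi v j | j <- iota 1 l].

Lemma descent_vecv i : i.+2 <= l ->
  descent ws i = is_black (pi i.+2) && ~~ is_black (pi i.+1).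
Proof.
move=> il; rewrite /descent !(nth_map 0) ?size_iota; try lia.
by rewrite !nth_iota; try lia; rewrite mu_vecv_lt ?v_gt0 //; lia.
Qed.

Lemma sLam_neq0_sign :
  sLam l pi v = (-1) ^+ count (fun i => ~~ (is_black (pi i.+2) && ~~ is_black (pi i.+1)))
                             (iota 0 l.-1).
Proof.
rewrite /sLam (s_l_neq0_sign sLam_neq0) size_map size_iota; congr (_ ^+ _).
apply: eq_in_count => i; rewrite mem_iota => il.
by rewrite descent_vecv //; lia.
Qed.

Lemma sLam_neq0_split k : 1 < k <= l ->
  if is_black (pi k) && ~~ is_black (pi k.-1)
  then mu_le (mu (interval_weight pi v k l.+1)) (mu (interval_weight pi v 1 k))
  else mu_lt (mu (interval_weight pi v 1 k)) (mu (interval_weight pi v k l.+1)).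
Proof.
case: k => [|[|i]] //= il.
have ABi : condA ws i || condB ws i.
  by apply: s_l_neq0_condAB; rewrite ?size_map ?size_iota //; lia.
have := condAB_split ABi; rewrite descent_vecv //.
rewrite -!map_take -!map_drop take_iota drop_iota !vsum_vecv.
by rewrite (minn_idPl (ltnW il)).
Qed.

End NonzeroSign.

Section TwoBlackVertices.

Variables (l : nat) (pi : nat -> color) (v : nat -> nat) (p q : nat).
Hypothesis v_gt0 : forall i, 1 <= i <= l -> 0 < v i.
Hypothesis Vb_pq : Vb l pi = [:: p; q].
Hypothesis rLam2 : rLam l pi v = 2.
Hypothesis sLam_neq0 : sLam l pi v != 0%R.

Local Notation white m n := (\sum_(m <= j < n | ~~ is_black (pi j)) v j).

Lemma Vb_pair_bounds : [/\ 0 < p, p < q & q <= l].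
Proof.
have Vb_sorted : sorted ltn (Vb l pi).
  by apply: sorted_filter; [exact: ltn_trans | exact: iota_ltn_sorted].
have : {subset Vb l pi <= iota 1 l} by move=> j; rewrite mem_filter => /andP[].
rewrite Vb_pq => Vb_sub; move: Vb_sorted; rewrite Vb_pq /= andbT => pq.
have := Vb_sub p; have := Vb_sub q; rewrite !inE !mem_iota !eqxx orbT /=.
by move=> /(_ isT) qin /(_ isT) pin; split; lia.
Qed.

Lemma is_black_pair j : 1 <= j <= l -> is_black (pi j) = (j == p) || (j == q).
Proof.
move=> jl; have := mem_filter (fun i => is_black (pi i)) j (iota 1 l).
rewrite -/(Vb l pi) Vb_pq mem_iota !inE => ->.
have -> : (0 < j) && (j < 1 + l) by lia.
by rewrite andbT.
Qed.

Lemma v_pair : v p = 1 /\ v q = 1.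
Proof.
have [p0 pq ql] := Vb_pair_bounds.
have : v p + v q = 2.
  rewrite -rLam2 /rLam /index_iota subSS subn0 -big_filter.
  by rewrite -/(Vb l pi) Vb_pq big_cons big_cons big_nil addn0.
have vp : 0 < v p by apply: v_gt0; lia.
have vq : 0 < v q by apply: v_gt0; lia.
lia.
Qed.

Lemma interval_weight_pair k : p < k <= q ->
  interval_weight pi v 1 k = (1, white 1 k) /\
  interval_weight pi v k l.+1 = (1, white k l.+1).
Proof.
move=> pkq; have [p0 pq ql] := Vb_pair_bounds; have [vp vq] := v_pair.
split; congr (_, _); [rewrite -vp | rewrite -vq];
  apply: big_nat_pred1 => [|j]; try lia;
  by rewrite mem_index_iota => jk; rewrite is_black_pair /=; lia.
Qed.

Lemma white_split k : p < k <= q ->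
  if (k == q) && (p.+1 < q) then white k l.+1 <= white 1 k
  else white 1 k < white k l.+1.
Proof.
move=> pkq; have [p0 pq ql] := Vb_pair_bounds.
have /(sLam_neq0_split v_gt0 sLam_neq0) : 1 < k <= l by lia.
have [-> ->] := interval_weight_pair pkq; rewrite mu_unit_le mu_unit_lt.
have black_k : is_black (pi k) && ~~ is_black (pi k.-1) = (k == q) && (p.+1 < q).
  by rewrite !is_black_pair; lia.
by rewrite black_k.
Qed.

Lemma white_below n : n <= q -> white 1 n = \sum_(1 <= i < n | i != p) v i.
Proof.
move=> nq; have [p0 pq ql] := Vb_pair_bounds.
by apply: congr_big_nat => // i ni; rewrite is_black_pair; lia.
Qed.

Lemma white_from_q : white q l.+1 = \sum_(q.+1 <= i < l.+1) v i.
Proof.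
have [p0 pq ql] := Vb_pair_bounds; rewrite -big_nat_neq_first.
by apply: congr_big_nat => // i ni; rewrite is_black_pair; lia.
Qed.

Lemma white_from_pred_q : p < q - 1 -> white (q - 1) l.+1 = v (q - 1) + white q l.+1.
Proof.
move=> pq1; have [p0 pq ql] := Vb_pair_bounds.
have white_q1 : is_black (pi (q - 1)) = false by rewrite is_black_pair; lia.
by rewrite big_ltn_cond ?white_q1 ?subn1 ?prednK //; lia.
Qed.

Lemma white_lt_gap : p.+1 < q ->
  \sum_(1 <= i < q - 1 | i != p) v i < v (q - 1) + \sum_(q.+1 <= i < l.+1) v i.
Proof.
move=> pq; have /white_split : p < q - 1 <= q by lia.
rewrite (_ : q - 1 == q = false) /=; last by lia.
by rewrite white_below ?white_from_pred_q ?white_from_q //; lia.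
Qed.

Lemma white_ge_gap : p.+1 < q ->
  \sum_(q.+1 <= i < l.+1) v i <= \sum_(1 <= i < q | i != p) v i.
Proof.
move=> pq; have /white_split : p < q <= q by lia.
by rewrite eqxx pq white_from_q white_below.
Qed.

Lemma white_lt_adjacent : q = p.+1 ->
  \sum_(1 <= i < q | i != p) v i < \sum_(q.+1 <= i < l.+1) v i.
Proof.
move=> qp; have /white_split : p < q <= q by lia.
by rewrite eqxx qp ltnn /= -qp white_from_q white_below.
Qed.

Lemma three_le_l : 3 <= l.
Proof.
have [p0 pq ql] := Vb_pair_bounds; case: (leqP 3 l) => // l_lt3.
have /white_lt_adjacent : q = p.+1 by lia.
by rewrite [X in _ < X]big_geq; lia.
Qed.

(* Index [i] of [iota 0 l.-1] is the split between vertices [i.+1] and [i.+2]. *)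
Lemma count_descents_pair :
  count (fun i => is_black (pi i.+2) && ~~ is_black (pi i.+1)) (iota 0 l.-1) =
  (1 < p) + (p.+1 < q).
Proof.
have [p0 pq ql] := Vb_pair_bounds.
pose at_p i := (1 < p) && (i == p - 2); pose at_q i := (p.+1 < q) && (i == q - 2).
rewrite (@eq_in_count _ _ (predU at_p at_q)); last first.
  by move=> i; rewrite mem_iota /at_p /at_q /= => il; rewrite !is_black_pair; lia.
have disj : count (predI at_p at_q) (iota 0 l.-1) = 0.
  by rewrite (@eq_count _ _ pred0) ?count_pred0 // => i; rewrite /at_p /at_q /=; lia.
have := count_predUI at_p at_q (iota 0 l.-1).
rewrite disj addn0 => ->.
by rewrite !count_iota_guarded_pred1 //; lia.
Qed.

Lemma sLam_pair : sLam l pi v = (-1) ^+ (l.-1 - ((1 < p) + (p.+1 < q))).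
Proof.
rewrite (sLam_neq0_sign v_gt0 sLam_neq0) -count_descents_pair.
set descent_at := fun i => _ && _.
by rewrite -[X in _ ^+ (X - _)](size_iota 0) -(count_predC descent_at) addKn.
Qed.

End TwoBlackVertices.

Local Open Scope ring_scope.

Theorem lemma4p10 (l : nat) (pi : nat -> color) (v : nat -> nat)
  (hv : forall i : nat, (1 <= i <= l)%N -> (0 < v i)%N)
  (hr : rLam l pi v = 2%N)
  (hcard : size (Vb l pi) = 2%N)
  (hs : sLam l pi v != 0) :
  (3 <= l)%N /\
  (Vb l pi = [:: 1%N; 2%N] -> sLam l pi v = (-1) ^+ (l - 1)) /\
  (forall a : nat, (3 <= a)%N -> Vb l pi = [:: 1%N; a] ->
     [/\ (\sum_(2 <= i < a - 1) v i < v (a - 1) + \sum_(a.+1 <= i < l.+1) v i)%N,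
         (\sum_(a.+1 <= i < l.+1) v i <= \sum_(2 <= i < a) v i)%N
       & sLam l pi v = (-1) ^+ l]) /\
  (Vb l pi = [:: 2%N; 3%N] ->
     (v 1 < \sum_(4 <= i < l.+1) v i)%N /\ sLam l pi v = (-1) ^+ l) /\
  (forall a : nat, (4 <= a)%N -> Vb l pi = [:: 2%N; a] ->
     [/\ (\sum_(1 <= i < a - 1 | i != 2%N) v i
            < v (a - 1) + \sum_(a.+1 <= i < l.+1) v i)%N,
         (\sum_(a.+1 <= i < l.+1) v i <= \sum_(1 <= i < a | i != 2%N) v i)%N
       & sLam l pi v = (-1) ^+ (l - 1)]).
Proof.
case Vb_pq: (Vb l pi) hcard => [|p [|q []]] // _.
have l_ge3 := three_le_l hv Vb_pq hr hs.
have sLam_sign := sLam_pair hv Vb_pq hr hs.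
have gap_lt := white_lt_gap hv Vb_pq hr hs.
have gap_ge := white_ge_gap hv Vb_pq hr hs.
split=> //; split; last split; last split.
- by case=> p1 q2; subst p q; rewrite sLam_sign /= subn0 subn1.
- move=> a a_ge3 [p1 qa]; subst p q; split.
  + by rewrite -(big_nat_neq_first 1); apply: gap_lt.
  + by rewrite -(big_nat_neq_first 1); apply: gap_ge.
  + by rewrite sLam_sign a_ge3 -(@sign_subn2 _ l); first congr (_ ^+ _); lia.
- case=> p2 q3; subst p q; split.
  + have := white_lt_adjacent hv Vb_pq hr hs erefl.
    by rewrite (big_ltn_cond (m := 1)) // (big_ltn_cond (m := 2)) //= big_geq ?addn0.
  + by rewrite sLam_sign -(@sign_subn2 _ l); first congr (_ ^+ _); lia.
- move=> a a_ge4 [p2 qa]; subst p q; split; try by [apply: gap_lt | apply: gap_ge].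
  by rewrite sLam_sign a_ge4 -(@sign_subn2 _ (l - 1)); first congr (_ ^+ _); lia.
Qed.
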